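(* Let $(X,d)$ be a compact metric space and let $f_1,f_2:X\to X$ be continuous. Suppose there is a point $c\in X$ with $f_1(x)=c$ for all $x\in X$. If the multiple mapping $F=\{f_1,f_2\}$ is (Hausdorff metric) sensitive, then $f_2$ is sensitive.
   Context: For the multiple mapping $F=\{f_1,f_2\}$ and $n\ge 1$, $F^n(x)=\{f_{i_1}f_{i_2}\cdots f_{i_n}(x)\mid i_1,\dots,i_n\in\{1,2\}\}$, a nonempty compact subset of $X$. The Hausdorff metric on nonempty compact subsets is $d_H(A,B)=\max\{\sup_{a\in A}\inf_{b\in B}d(a,b),\sup_{b\in B}\inf_{a\in A}d(a,b)\}$. $F$ is (Hausdorff metric) sensitive if there is $\delta>0$ such that for every nonempty open $U\subset X$ there exist $x,y\in U$ and $n\in\mathbb{Z}^+$ with $d_H(F^n(x),F^n(y))>\delta$. A continuous map $f:X\to X$ is sensitive if there is $\delta>0$ such that for every nonempty open $U\subset X$ there exist $x,y\in U$ and $n\in\mathbb{Z}^+$ with $d(f^n(x),f^n(y))>\delta$. Here $\mathbb{Z}^+=\{1,2,3,\dots\}$. *)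

From HB Require Import structures.
From mathcomp Require Import all_boot all_order all_algebra.
From mathcomp Require Import all_classical all_reals all_analysis.
Set Implicit Arguments. Unset Strict Implicit. Unset Printing Implicit Defensive.
Import Order.TTheory GRing.Theory Num.Theory.
Local Open Scope classical_set_scope.
Local Open Scope ring_scope.

Section Defs.
Context {R : realType} {X : metricType R}.

Definition pick_map (f1 f2 : X -> X) (b : bool) : X -> X := if b then f1 else f2.

(* f_{i_1} f_{i_2} ... f_{i_n} (x) for the word w = [:: i_1; ...; i_n] *)
Definition word_apply (f1 f2 : X -> X) (w : seq bool) (x : X) : X :=
  foldr (fun b y => pick_map f1 f2 b y) x w.

Definition Fiter (f1 f2 : X -> X) (n : nat) (x : X) : set X :=
  [set y | exists w : seq bool, size w = n /\ y = word_apply f1 f2 w x].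

Definition hausdorff_dist (A B : set X) : R :=
  Num.max (sup [set inf [set mdist a b | b in B] | a in A])
          (sup [set inf [set mdist a b | a in A] | b in B]).

Definition multi_sensitive (f1 f2 : X -> X) : Prop :=
  exists2 delta : R, 0 < delta &
    forall U : set X, open U -> U !=set0 ->
      exists x y n, [/\ U x, U y, (0 < n)%N &
        hausdorff_dist (Fiter f1 f2 n x) (Fiter f1 f2 n y) > delta].

Definition sensitive (f : X -> X) : Prop :=
  exists2 delta : R, 0 < delta &
    forall U : set X, open U -> U !=set0 ->
      exists x y n, [/\ U x, U y, (0 < n)%N &
        mdist (iter n f x) (iter n f y) > delta].

End Defs.

(** Every word containing the letter [f1] maps all of [X] to a single point,
    because [f1] is constant.  Hence [F^n(x)] is [{f2^n x}] together with a
    set that does not depend on [x], so every point of [F^n(x)] lies within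
    [d(f2^n x, f2^n y)] of [F^n(y)] and vice versa.  The Hausdorff distance of
    [F^n(x)] and [F^n(y)] is thus bounded by [d(f2^n x, f2^n y)], and the
    sensitivity constant of [F] works for [f2]. *)
From HB Require Import structures.
From mathcomp Require Import all_boot all_order all_algebra.
From mathcomp Require Import all_classical all_reals all_analysis.
Import Order.TTheory GRing.Theory Num.Theory.
Local Open Scope classical_set_scope.
Local Open Scope ring_scope.

Section HausdorffBound.
Context {R : realType} {X : metricType R}.

Lemma hausdorff_excess_le (A B : set X) (r : R) : A !=set0 ->
  (forall a, A a -> exists2 b, B b & mdist a b <= r) ->
  sup [set inf [set mdist a b | b in B] | a in A] <= r.
Proof.
move=> [a0 Aa0] near_B; apply: ge_sup => [|_ [a Aa <-]].
  by exists (inf [set mdist a0 b | b in B]), a0.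
have [b Bb dab] := near_B a Aa.
have lb_dist : has_lbound [set mdist a b | b in B].
  by exists 0 => _ [b' _ <-]; exact: mdist_ge0.
by apply: le_trans dab; apply: ge_inf lb_dist _ _; exists b.
Qed.

Lemma hausdorff_dist_le (A B : set X) (r : R) : A !=set0 -> B !=set0 ->
  (forall a, A a -> exists2 b, B b & mdist a b <= r) ->
  (forall b, B b -> exists2 a, A a & mdist b a <= r) ->
  hausdorff_dist A B <= r.
Proof.
move=> A0 B0 near_B near_A; rewrite /hausdorff_dist ge_max.
rewrite hausdorff_excess_le //=.
under eq_imagel => b _ do under eq_imagel => a _ do rewrite metric_sym.
exact: hausdorff_excess_le.
Qed.

End HausdorffBound.

Section ConstantFirstMap.
Context {R : realType} {X : metricType R} {f1 f2 : X -> X} {c : X}.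
Hypothesis f1_const : forall x, f1 x = c.

Lemma word_apply_nseq_false n x : word_apply f1 f2 (nseq n false) x = iter n f2 x.
Proof. by elim: n => //= n ->. Qed.

Lemma word_apply_f2_or_const (w : seq bool) :
  w = nseq (size w) false \/ forall x y, word_apply f1 f2 w x = word_apply f1 f2 w y.
Proof.
elim: w => [|[] w [IH|IH]]; first by left.
- by right => x y; rewrite /= !f1_const.
- by right => x y; rewrite /= !f1_const.
- by left; rewrite /= -IH.
- by right => x y; rewrite /= (IH x y).
Qed.

Lemma Fiter_iter n x : Fiter f1 f2 n x (iter n f2 x).
Proof. by exists (nseq n false); rewrite size_nseq word_apply_nseq_false. Qed.

Lemma Fiter_iter_or_shared n x y p : Fiter f1 f2 n x p ->
  p = iter n f2 x \/ Fiter f1 f2 n y p.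
Proof.
move=> [w [<- ->]]; case: (word_apply_f2_or_const w) => [-> | w_const].
- by left; rewrite word_apply_nseq_false size_nseq.
- by right; exists w; rewrite (w_const x y).
Qed.

Lemma Fiter_near n x y p : Fiter f1 f2 n x p ->
  exists2 q, Fiter f1 f2 n y q & mdist p q <= mdist (iter n f2 x) (iter n f2 y).
Proof.
case/(Fiter_iter_or_shared _ _ y) => [-> | Fy_p].
- by exists (iter n f2 y); [exact: Fiter_iter | ].
- by exists p; rewrite // mdistxx mdist_ge0.
Qed.

Lemma hausdorff_Fiter_le_mdist_iter n x y :
  hausdorff_dist (Fiter f1 f2 n x) (Fiter f1 f2 n y) <= mdist (iter n f2 x) (iter n f2 y).
Proof.
apply: hausdorff_dist_le; [by exists (iter n f2 x); exact: Fiter_iter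
  | by exists (iter n f2 y); exact: Fiter_iter
  | exact: Fiter_near | ].
by move=> q /(Fiter_near _ _ x); rewrite metric_sym.
Qed.

End ConstantFirstMap.

Theorem theorem3p2 (R : realType) (X : metricType R) (f1 f2 : X -> X) (c : X) :
  compact [set: X] -> continuous f1 -> continuous f2 ->
  (forall x : X, f1 x = c) ->
  multi_sensitive f1 f2 -> sensitive f2.
Proof.
move=> _ _ _ f1_const [delta delta_gt0 F_sens]; exists delta => // U U_open U_neq0.
have [x [y [n [Ux Uy n_gt0 far]]]] := F_sens U U_open U_neq0.
exists x, y, n; split => //.
by apply: lt_le_trans far _; exact: hausdorff_Fiter_le_mdist_iter.
Qed.
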